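(* Let $G$ be a connected graph with $n\ge 2$ vertices and diameter $D$. Then $$EE(G) > e^{\sqrt[D]{n-1}} + (n-1) - \sqrt[D]{n-1}.$$
   Context: All graphs are finite, simple and undirected. For a graph $G$ with adjacency matrix $A(G)$ having eigenvalues $\lambda_1\ge\cdots\ge\lambda_n$, the Estrada index is $EE(G)=\sum_{i=1}^n e^{\lambda_i}$. The diameter $D$ is the maximum over all pairs of vertices of the length of a shortest path between them. *)

From HB Require Import structures.
From Stdlib Require Import Reals ClassicalEpsilon FunctionalExtensionality.
From mathcomp Require Import all_boot all_order all_algebra.
Set Implicit Arguments. Unset Strict Implicit. Unset Printing Implicit Defensive.

Definition R_eqb (x y : R) : bool := if Req_EM_T x y then true else false.
Lemma R_eqP : Equality.axiom R_eqb.
Proof. by move=> x y; rewrite /R_eqb; destruct (Req_EM_T x y); constructor. Qed.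
HB.instance Definition _ := hasDecEq.Build R R_eqP.

Definition R_find (P : pred R) (_ : nat) : option R :=
  match excluded_middle_informative (exists x, P x) with
  | left h => Some (proj1_sig (constructive_indefinite_description _ h))
  | right _ => None
  end.
Lemma R_find_correct P n x : R_find P n = Some x -> P x.
Proof.
rewrite /R_find; case: excluded_middle_informative => // h [<-].
exact: (proj2_sig (constructive_indefinite_description _ h)).
Qed.
Lemma R_find_complete (P : pred R) : (exists x, P x) -> exists n, R_find P n.
Proof. by move=> h; exists 0%N; rewrite /R_find; case: excluded_middle_informative. Qed.
Lemma R_find_ext (P Q : pred R) : P =1 Q -> R_find P =1 R_find Q.
Proof. by move=> /functional_extensionality ->. Qed.
HB.instance Definition _ := hasChoice.Build R R_find_correct R_find_complete R_find_ext.

Lemma R_addA : associative Rplus. Proof. by move=> x y z; rewrite Rplus_assoc. Qed.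
Lemma R_addC : commutative Rplus. Proof. exact: Rplus_comm. Qed.
Lemma R_add0 : left_id R0 Rplus. Proof. exact: Rplus_0_l. Qed.
Lemma R_addN : left_inverse R0 Ropp Rplus. Proof. exact: Rplus_opp_l. Qed.
HB.instance Definition _ := GRing.isZmodule.Build R R_addA R_addC R_add0 R_addN.

Lemma R_mulA : associative Rmult. Proof. by move=> x y z; rewrite Rmult_assoc. Qed.
Lemma R_mulC : commutative Rmult. Proof. exact: Rmult_comm. Qed.
Lemma R_mul1 : left_id R1 Rmult. Proof. exact: Rmult_1_l. Qed.
Lemma R_mulDl : left_distributive Rmult Rplus. Proof. by move=> x y z; rewrite Rmult_plus_distr_r. Qed.
Lemma R_one_neq0 : R1 != R0. Proof. by apply/eqP; exact: R1_neq_R0. Qed.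
HB.instance Definition _ :=
  GRing.Zmodule_isComNzRing.Build R R_mulA R_mulC R_mul1 R_mulDl R_one_neq0.

Definition R_inv (x : R) : R := if Req_EM_T x R0 then R0 else Rinv x.
Lemma R_mulVf (x : R) : x != 0%R -> (R_inv x * x)%R = 1%R.
Proof.
move=> /eqP hx; rewrite /R_inv; destruct (Req_EM_T x R0) as [h|h].
  by case: hx.
exact: Rinv_l.
Qed.
Lemma R_inv0 : R_inv 0%R = 0%R.
Proof. rewrite /R_inv; case: Req_EM_T => [//|h]; by case: h. Qed.
HB.instance Definition _ := GRing.ComNzRing_isField.Build R R_mulVf R_inv0.

Local Open Scope ring_scope.

Definition simple_graph (n : nat) (e : rel 'I_n) : Prop :=
  (forall i j, e i j = e j i) /\ (forall i, e i i = false).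

Definition connected_graph (n : nat) (e : rel 'I_n) : Prop :=
  forall i j, connect e i j.

Fixpoint walk_le (n : nat) (e : rel 'I_n) (k : nat) (i j : 'I_n) : bool :=
  match k with
  | 0 => i == j
  | k'.+1 => walk_le e k' i j || [exists l, e i l && walk_le e k' l j]
  end.

(* Distance: the least k < n with a walk of length <= k from i to j
   (shortest paths in a graph on n vertices have length <= n-1;
   returns n if j is unreachable from i). *)
Definition gdist (n : nat) (e : rel 'I_n) (i j : 'I_n) : nat :=
  find (fun k => walk_le e k i j) (iota 0 n).

Definition diameter (n : nat) (e : rel 'I_n) : nat :=
  \max_(i : 'I_n) \max_(j : 'I_n) gdist e i j.

Definition adjmx (n : nat) (e : rel 'I_n) : 'M[R]_n :=
  \matrix_(i < n, j < n) (if e i j then 1 else 0).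

(* lam is the list of all eigenvalues (with multiplicity) of the adjacency
   matrix: the characteristic polynomial splits as prod (X - lam_i). *)
Definition adj_spectrum (n : nat) (e : rel 'I_n) (lam : seq R) : Prop :=
  char_poly (adjmx e) = \prod_(x <- lam) ('X - x%:P).

Definition estrada (lam : seq R) : R := \sum_(x <- lam) exp x.

From HB Require Import structures.
From Stdlib Require Import Reals Lra Psatz.
From mathcomp Require Import all_boot all_order all_algebra zify.
Set Implicit Arguments. Unset Strict Implicit. Unset Printing Implicit Defensive.
Import GRing.Theory.

(* The power sums of the eigenvalues are the closed-walk counts tr A^k, so they
   are nonnegative integers and the first one vanishes.  From any vertex, the
   walks of length D reach, with multiplicity, all n - 1 other vertices, so at
   least (n-1)^j walks of length jD start there; by pigeonhole and symmetry
   n^2 tr A^(2jD) >= (n-1)^(2j).  Comparing growth rates of power sums, the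
   nonnegative odd ones force the largest eigenvalue mu to dominate every
   |lambda_i|, and the even ones then force
   mu^D >= n - 1.  Finally e^x >= 1 + x on the other eigenvalues, which sum to
   -mu < 0 and so are not all zero, gives EE > e^mu - mu + n - 1, and
   e^x - x is increasing on [0, +oo). *)

Section TraceOfPowers.
Local Open Scope ring_scope.
Variable F : fieldType.

Lemma similar_exp n (P A : 'M[F]_n) k : P \in unitmx ->
  (P *m A *m invmx P) ^+ k = P *m A ^+ k *m invmx P.
Proof.
move=> P_unit; elim: k => [|k IHk]; first by rewrite !expr0 mulmx1 mulmxV.
rewrite exprS IHk -!mulmxE !mulmxA mulmxKV // -!mulmxA.
by rewrite [A *m (A ^+ k *m _)]mulmxA mulmxE -exprS.
Qed.

Lemma mxtrace_exp_similar n (P A : 'M[F]_n) k : P \in unitmx ->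
  \tr ((P *m A *m invmx P) ^+ k) = \tr (A ^+ k).
Proof.
by move=> P_unit; rewrite similar_exp // mxtrace_mulC mulmxA mulVmx // mul1mx.
Qed.

Lemma char_poly_similar n (P A : 'M[F]_n) : P \in unitmx ->
  char_poly (P *m A *m invmx P) = char_poly A.
Proof.
move=> P_unit; rewrite /char_poly /char_poly_mx.
have PV1 : map_mx polyC P *m map_mx polyC (invmx P) = 1%:M.
  by rewrite -map_mxM mulmxV // map_mx1.
have -> : 'X%:M - map_mx polyC (P *m A *m invmx P) =
   map_mx polyC P *m ('X%:M - map_mx polyC A) *m map_mx polyC (invmx P).
  by rewrite mulmxBr mulmxBl !map_mxM mul_mx_scalar -scalemxAl PV1 scalemx1.
rewrite !det_mulmx !det_map_mx mulrC mulrA -rmorphM.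
by rewrite -det_mulmx mulVmx // det1 rmorph1 mul1r.
Qed.

Lemma eigenvalue_similar_lblock n (A : 'M[F]_(1 + n)) a : eigenvalue A a ->
  exists P C (B : 'M_n),
    P \in unitmx /\ P *m A *m invmx P = block_mx a%:M 0 C B.
Proof.
case/eigenvalueP => v vA v_neq0.
have rank_v : \rank v = 1%N by rewrite rank_rV v_neq0.
set P := row_ebase v; have P_unit : P \in unitmx := row_ebase_unit v.
(* [u] is [v] up to the invertible 1x1 factor [col_ebase v] *)
set u : 'M_(1, 1 + n) := pid_mx 1 *m P.
have vE : col_ebase v *m u = v by have := mulmx_ebase v; rewrite rank_v -mulmxA.
have uA : u *m A = a *: u.
  apply: (can_inj (mulKmx (col_ebase_unit v))).
  by rewrite /= mulmxA vE vA -scalemxAr vE.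
set Q := P *m A *m invmx P.
have Q_up : usubmx Q = a *: row_mx 1%:M 0.
  have -> : usubmx Q = pid_mx 1 *m Q.
    by rewrite -{2}(vsubmxK Q) pid_mx_row mul_row_col mul1mx mul0mx addr0.
  by rewrite /Q !mulmxA -/u uA -scalemxAl /u -mulmxA mulmxV // mulmx1 pid_mx_row.
exists P, (dlsubmx Q), (drsubmx Q); split=> //.
rewrite -/Q -{1}(submxK Q) /ulsubmx /ursubmx Q_up scale_row_mx row_mxKl row_mxKr.
by rewrite scaler0 scalemx1.
Qed.

Lemma char_poly_lblock n (a : F) (C : 'M[F]_(n, 1)) (B : 'M[F]_n) :
  char_poly (block_mx a%:M 0 C B : 'M_(1 + n)) = ('X - a%:P) * char_poly B.
Proof.
rewrite /char_poly /char_poly_mx map_block_mx map_mx0 scalar_mx_block.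
by rewrite opp_block_mx add_block_mx oppr0 addr0 det_lblock det_mx11 !mxE mulr1n.
Qed.

Lemma lblock_exp n (a : F) (C : 'M[F]_(n, 1)) (B : 'M[F]_n) k :
  exists Ck, (block_mx a%:M 0 C B : 'M_(1 + n)) ^+ k
             = block_mx (a ^+ k)%:M 0 Ck (B ^+ k).
Proof.
elim: k => [|k [Ck IHk]]; first by exists 0; rewrite !expr0 -scalar_mx_block.
exists (C *m (a ^+ k)%:M + B *m Ck).
rewrite exprS IHk -mulmxE mulmx_block !mulmx0 !mul0mx !addr0 add0r.
by rewrite -scalar_mxM -exprS mulmxE -exprS.
Qed.

Lemma mxtrace_exp_split n (A : 'M[F]_n) (s : seq F) k :
  char_poly A = \prod_(x <- s) ('X - x%:P) ->
  \tr (A ^+ k) = \sum_(x <- s) x ^+ k.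
Proof.
elim: n A s => [|n IHn] A s charA.
  have : size (char_poly A) = 1%N by rewrite size_char_poly.
  rewrite charA size_prod_XsubC; case: s {charA} => // _.
  by rewrite big_nil /mxtrace big_ord0.
have : size (char_poly A) = n.+2 by rewrite size_char_poly.
rewrite charA size_prod_XsubC; case: s charA => // a s charA _.
have Aa : eigenvalue A a.
  by rewrite eigenvalue_root_char charA big_cons rootM root_XsubC eqxx.
have [P [C [B [P_unit AE]]]] := eigenvalue_similar_lblock Aa.
have charB : char_poly B = \prod_(x <- s) ('X - x%:P).
  apply: (@mulfI _ ('X - a%:P)); first by rewrite polyXsubC_eq0.
  by rewrite -(char_poly_lblock a C) -AE char_poly_similar // charA big_cons.
have [Ck AkE] := lblock_exp a C B k.
rewrite -(mxtrace_exp_similar _ k P_unit) AE AkE.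
by rewrite mxtrace_block mxtrace_scalar (IHn _ _ charB) big_cons.
Qed.

End TraceOfPowers.

Lemma card_bigcup_le (I T : finType) (P : pred I) (F : I -> {set T}) :
  #|\bigcup_(i | P i) F i| <= \sum_(i | P i) #|F i|.
Proof.
elim/big_rec2: _ => [|i m U _ leUm]; first by rewrite cards0.
exact: leq_trans (leq_card_setU _ _) (leq_add (leqnn _) leUm).
Qed.

Section Walks.
Variables (n : nat) (e : rel 'I_n).

Definition nat_adjmx : 'M[nat]_n := \matrix_(i, j) (e i j : nat).
Local Notation N := nat_adjmx.

Lemma adjmx_exp k i j : (adjmx e ^+ k)%R i j = ((N ^+ k)%R i j)%:R%R.
Proof.
elim: k i j => [|k IHk] i j; first by rewrite !expr0 !mxE; case: (i == j).
rewrite !exprS -!mulmxE !mxE natr_sum; apply: eq_bigr => l _.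
by rewrite IHk !mxE natrM; case: (e i l).
Qed.

Lemma mxtrace_adjmx_exp k : (\tr (adjmx e ^+ k) = (\tr (N ^+ k))%:R)%R.
Proof. by rewrite /mxtrace natr_sum; apply: eq_bigr => i _; rewrite adjmx_exp. Qed.

Lemma mxtrace_nat_adjmx : (forall i, e i i = false) -> mxtrace N = 0.
Proof. by move=> e_irr; rewrite /mxtrace big1 // => i _; rewrite mxE e_irr. Qed.

Definition walks k (v : 'I_n) : nat := \sum_(w < n) (N ^+ k)%R v w.

Lemma walksD a b v : walks (a + b) v = \sum_(l < n) (N ^+ a)%R v l * walks b l.
Proof.
rewrite /walks; under eq_bigr do rewrite exprD -mulmxE mxE.
by rewrite exchange_big; apply: eq_bigr => l _; rewrite big_distrr.
Qed.

Lemma walksS k v : walks k.+1 v = \sum_(l | e v l) walks k l.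
Proof.
rewrite -add1n walksD [RHS]big_mkcond; apply: eq_bigr => l _.
by rewrite expr1 mxE; case: (e v l); rewrite ?mul1n.
Qed.

Lemma walks_mul_ge c d j v :
  (forall u, c <= walks d u) -> c ^ j <= walks (j * d) v.
Proof.
move=> walks_d; elim: j v => [|j IHj] v.
  by rewrite /walks expr0 (bigD1 v) //= mxE eqxx leq_addr.
rewrite mulSn walksD expnS.
apply: leq_trans (_ : \sum_(l < n) (N ^+ d)%R v l * c ^ j <= _).
  by rewrite -big_distrl leq_mul2r (walks_d v) orbT.
by apply: leq_sum => l _; rewrite leq_mul2l IHj orbT.
Qed.

Lemma walk_le_mono k k' v w : k <= k' -> walk_le e k v w -> walk_le e k' v w.
Proof.
elim: k' => [|k' IHk']; first by rewrite leqn0 => /eqP ->.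
rewrite leq_eqVlt => /orP[/eqP -> //|]; rewrite ltnS => le_kk' vw.
by rewrite /= IHk'.
Qed.

Lemma walk_le_first k v w : walk_le e k.+1 v w -> w != v ->
  exists2 l, e v l & walk_le e k l w.
Proof.
elim: k v w => [|k IHk] v w.
  by case/orP=> [/eqP -> |/existsP[l /andP[vl lw]]]; [rewrite eqxx | exists l].
case/orP=> [vw wv|/existsP[l /andP[vl lw]] _]; last by exists l.
by have [l vl lw] := IHk _ _ vw wv; exists l; rewrite //= lw.
Qed.

Lemma path_walk_le p v : path e v p -> walk_le e (size p) v (last v p).
Proof.
elim: p v => [|u p IHp] v /=; first by rewrite eqxx.
by case/andP=> vu up; apply/orP; right; apply/existsP; exists u; rewrite vu IHp.
Qed.

Lemma connect_walk_le v w : connect e v w -> exists2 k, k < n & walk_le e k v w.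
Proof.
case/connectP=> p vp ->; case/shortenP: vp => q vq q_uniq _.
exists (size q); last exact: path_walk_le.
by have := max_card (mem (v :: q)); rewrite (card_uniqP q_uniq) card_ord.
Qed.

Lemma walk_le_gdist v w : connect e v w -> walk_le e (gdist e v w) v w.
Proof.
case/connect_walk_le=> k lt_kn vw.
have has_k : has (fun k => walk_le e k v w) (iota 0 n).
  by apply/hasP; exists k; rewrite // mem_iota.
have := nth_find 0 has_k; rewrite nth_iota ?add0n //.
by move: has_k; rewrite has_find size_iota.
Qed.

Lemma gdist_le_diameter v w : gdist e v w <= diameter e.
Proof.
apply: leq_trans (leq_bigmax v).
exact: (leq_bigmax (F := fun w => gdist e v w) w).
Qed.

Definition ball k (v : 'I_n) : {set 'I_n} := [set w | walk_le e k v w].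

Lemma ball_succD1 k v :
  ball k.+1 v :\ v \subset \bigcup_(l | e v l) (ball k l :\ v).
Proof.
apply/subsetP=> w; rewrite !inE => /andP[wv vw].
have [l vl lw] := walk_le_first vw wv.
by apply/bigcupP; exists l; rewrite // !inE wv.
Qed.

Hypothesis e_conn : connected_graph e.

Lemma walk_le_diameter v w : walk_le e (diameter e) v w.
Proof. exact: walk_le_mono (gdist_le_diameter v w) (walk_le_gdist (e_conn v w)). Qed.

Lemma diameter_gt0 : 1 < n -> 0 < diameter e.
Proof.
move=> n_gt1; pose v := Ordinal (ltnW n_gt1); pose w := Ordinal n_gt1.
have vw : v != w by [].
apply: leq_trans (gdist_le_diameter v w); rewrite lt0n.
by apply: contra vw => /eqP gdist0; have := walk_le_gdist (e_conn v w); rewrite gdist0.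
Qed.

Hypothesis e_sym : forall i j, e i j = e j i.

Lemma card_ball_le_walks k v : #|ball k.+1 v :\ v| <= walks k.+1 v.
Proof.
elim: k v => [|k IHk] v; rewrite walksS;
  apply: leq_trans (subset_leq_card (ball_succD1 _ v)) _;
  apply: leq_trans (card_bigcup_le _ _) _; apply: leq_sum => l vl.
  apply: leq_trans (subset_leq_card (subsetDl _ _)) _.
  have -> : ball 0 l = [set l] by apply/setP => w; rewrite !inE eq_sym.
  by rewrite cards1 /walks expr0 (bigD1 l) //= mxE eqxx leq_addr.
(* removing [v] or [l] from [ball k.+1 l] loses one vertex either way *)
have l_in : l \in ball k.+1 l by rewrite inE (walk_le_mono (leq0n _) (eqxx l)).
have v_in : v \in ball k.+1 l.
  rewrite inE; apply: (walk_le_mono (k:=1)) => //=; apply/orP; right.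
  by apply/existsP; exists v; rewrite -e_sym vl /=.
have := cardsD1 v (ball k.+1 l); rewrite (cardsD1 l) l_in v_in => /eqP.
by rewrite eqn_add2l => /eqP <-; exact: IHk.
Qed.

Lemma trmx_nat_adjmx_exp k : trmx (N ^+ k)%R = (N ^+ k)%R.
Proof.
have N_sym : trmx N = N by apply/matrixP => i j; rewrite !mxE e_sym.
elim: k => [|k IHk]; first by rewrite !expr0 tr_scalar_mx.
by rewrite exprS -mulmxE trmx_mul IHk N_sym mulmxE -exprSr exprS.
Qed.

Lemma walks_sq_le_mxtrace m v : walks m v ^ 2 <= n ^ 2 * mxtrace (N ^+ (2 * m))%R.
Proof.
(* pigeonhole: some endpoint [w] receives at least a [1/n] share of the walks *)
have [w _ w_max] := @arg_maxnP _ v predT (fun w => (N ^+ m)%R v w) isT.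
have walks_le : walks m v <= n * (N ^+ m)%R v w.
  rewrite /walks -[n in n * _]card_ord -sum_nat_const.
  by apply: leq_sum => u _; exact: w_max.
apply: (@leq_trans ((n * (N ^+ m)%R v w) ^ 2)); first by rewrite leq_exp2r.
rewrite expnMn leq_mul2l; apply/orP; right.
have N_wv : (N ^+ m)%R w v = (N ^+ m)%R v w.
  by rewrite -[in LHS]trmx_nat_adjmx_exp mxE.
rewrite /mxtrace (bigD1 v) //= mul2n -addnn exprD -mulmxE mxE (bigD1 w) //=.
by rewrite N_wv -mulnn; apply: leq_trans (leq_addr _ _) (leq_addr _ _).
Qed.

Lemma walks_diameter v : 0 < diameter e -> n.-1 <= walks (diameter e) v.
Proof.
case: (diameter e) (walk_le_diameter v) => // d ball_full _.
apply: leq_trans (card_ball_le_walks d v).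
have -> : ball d.+1 v = setT by apply/setP=> w; rewrite !inE ball_full.
by rewrite setTD cardsC1 card_ord.
Qed.

Lemma mxtrace_exp_diameter_ge j : 1 < n ->
  ((n.-1) ^ j) ^ 2 <= n ^ 2 * mxtrace (N ^+ (2 * (j * diameter e)))%R.
Proof.
move=> n_gt1; pose v := Ordinal (ltnW n_gt1).
apply: leq_trans (walks_sq_le_mxtrace _ v); rewrite leq_exp2r //.
apply: walks_mul_ge => u; exact: walks_diameter u (diameter_gt0 n_gt1).
Qed.

End Walks.

Open Scope R_scope.

Lemma pow_dominates a b c d : 0 <= b < a -> 0 < c -> exists j, d * b ^ j < c * a ^ j.
Proof.
move=> [b_ge0 lt_ba] c_gt0.
have [->|b_gt0] : b = 0 \/ 0 < b by lra.
  by exists 1%N; rewrite /=; nra.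
set r := a / b.
have aE : a = b * r by rewrite /r; field; lra.
have r_gt1 : Rabs r > 1 by rewrite Rabs_pos_eq; nra.
have [j rj_ge] := Pow_x_infinity _ r_gt1 (d / c + 1).
have c_rj : c * r ^ j >= d + c.
  have := rj_ge j (Nat.le_refl j); rewrite Rabs_pos_eq; last by apply: pow_le; nra.
  have -> : d + c = c * (d / c + 1) by field; lra.
  by move=> ?; apply: Rmult_ge_compat_l => //; lra.
have bj_gt0 := pow_lt b j b_gt0.
by exists j; rewrite aE Rpow_mult_distr; nra.
Qed.

Lemma Rsum_nil (f : R -> R) : (\sum_(x <- [::]) f x)%R = 0.
Proof. by rewrite big_nil. Qed.

Lemma Rsum_cons (f : R -> R) a l :
  (\sum_(x <- a :: l) f x)%R = f a + (\sum_(x <- l) f x)%R.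
Proof. by rewrite big_cons. Qed.

Lemma Rsum_le (f g : R -> R) (l : seq R) :
  (forall x, x \in l -> f x <= g x) ->
  (\sum_(x <- l) f x)%R <= (\sum_(x <- l) g x)%R.
Proof.
elim: l => [|a l IHl] fg; first by rewrite !Rsum_nil; lra.
rewrite !Rsum_cons; apply: Rplus_le_compat; first by apply: fg; rewrite mem_head.
by apply: IHl => x lx; apply: fg; rewrite in_cons lx orbT.
Qed.

Lemma Rsum_lt (f g : R -> R) (l : seq R) :
  (forall x, x \in l -> f x <= g x) -> (exists2 x, x \in l & f x < g x) ->
  (\sum_(x <- l) f x)%R < (\sum_(x <- l) g x)%R.
Proof.
elim: l => [|a l IHl] fg [x]; first by [].
rewrite !Rsum_cons in_cons => /orP[/eqP -> fgx|lx fgx].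
  apply: Rplus_lt_le_compat => //.
  by apply: Rsum_le => y ly; apply: fg; rewrite in_cons ly orbT.
apply: Rplus_le_lt_compat; first by apply: fg; rewrite mem_head.
by apply: IHl; [move=> y ly; apply: fg; rewrite in_cons ly orbT | exists x].
Qed.

Lemma Rsum_const (c : R) (l : seq R) : (\sum_(x <- l) c)%R = INR (size l) * c.
Proof.
elim: l => [|a l IHl]; first by rewrite Rsum_nil /=; lra.
by rewrite Rsum_cons IHl (S_INR (size l)); lra.
Qed.

Lemma seq_has_max (l : seq R) : l != [::] ->
  exists2 m, m \in l & forall x, x \in l -> x <= m.
Proof.
elim: l => [//|a l IHl] _.
have [->|l_neq0] := eqVneq l [::].
  by exists a; rewrite ?mem_head // => x; rewrite inE => /eqP ->; lra.
have [m lm m_max] := IHl l_neq0.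
have [am|ma] := Rle_lt_dec a m.
  exists m => [|x]; first by rewrite in_cons lm orbT.
  by rewrite in_cons => /orP[/eqP ->|/m_max].
exists a => [|x]; first by rewrite mem_head.
by rewrite in_cons => /orP[/eqP ->|/m_max]; lra.
Qed.

Definition power_sum (l : seq R) (k : nat) : R := (\sum_(x <- l) pow x k)%R.

Lemma power_sum_rem (l : seq R) x k : x \in l ->
  power_sum l k = x ^ k + power_sum (rem x l) k.
Proof. by move=> lx; rewrite /power_sum (perm_big _ (perm_to_rem lx)) big_cons. Qed.

Lemma pow_muln x a b : x ^ (a * b) = (x ^ a) ^ b.
Proof. exact: pow_mult. Qed.

Lemma pow_odd x j : x ^ (2 * j).+1 = x * (x ^ 2) ^ j.
Proof. by rewrite -pow_muln. Qed.

Lemma pow_odd_le x m j : x <= m -> 0 <= m -> x ^ (2 * j).+1 <= m ^ (2 * j).+1.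
Proof.
move=> xm m_ge0; have [x_ge0|x_lt0] := Rle_lt_dec 0 x; first by apply: pow_incr; split.
rewrite !pow_odd; have := pow_le (m ^ 2) j (pow2_ge_0 m).
have := pow_le (x ^ 2) j (pow2_ge_0 x); nra.
Qed.

Lemma power_sum_le (l : seq R) k B : (forall x, x \in l -> x ^ k <= B) ->
  power_sum l k <= INR (size l) * B.
Proof. by move=> xB; rewrite -Rsum_const; apply: Rsum_le. Qed.

Section PowerSums.
Variable l : seq R.
Hypothesis power_sum_ge0 : forall k, 0 <= power_sum l k.
Variable mu : R.
Hypothesis l_mu : mu \in l.
Hypothesis mu_max : forall x, x \in l -> x <= mu.

Lemma max_ge0 : 0 <= mu.
Proof.
have sum_le : power_sum l 1 <= INR (size l) * mu.
  by apply: power_sum_le => x lx; rewrite pow_1; exact: mu_max.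
have size_gt0 : 0 < INR (size l) by apply: lt_0_INR; apply/ltP; case: (l) l_mu.
have := power_sum_ge0 1; nra.
Qed.

(* odd power sums are nonnegative, so no eigenvalue below [- mu] can dominate them *)
Lemma opp_le_max x : x \in l -> - x <= mu.
Proof.
move=> lx; apply: Rnot_lt_le => mu_lt; have mu_ge0 := max_ge0.
have [j] := @pow_dominates (x ^ 2) (mu ^ 2) (- x) (INR (size l) * mu)
  ltac:(nra) ltac:(lra).
apply/Rle_not_lt; have := power_sum_ge0 (2 * j).+1.
rewrite (power_sum_rem _ lx).
have rem_le : power_sum (rem x l) (2 * j).+1 <= INR (size (rem x l)) * mu ^ (2 * j).+1.
  by apply: power_sum_le => y /mem_rem ly; apply: pow_odd_le => //; exact: mu_max.
have size_le : INR (size (rem x l)) <= INR (size l).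
  by apply: le_INR; apply/leP; rewrite size_rem // leq_pred.
have mu_pow_ge0 : 0 <= mu ^ (2 * j).+1 by apply: pow_le.
have := Rmult_le_compat_r _ _ _ mu_pow_ge0 size_le.
move: rem_le mu_pow_ge0; rewrite !pow_odd; nra.
Qed.

Lemma max_pow_ge D :
  (forall j, (INR (size l).-1 ^ j) ^ 2 <= INR (size l) ^ 2 * power_sum l (2 * (j * D))) ->
  INR (size l).-1 <= mu ^ D.
Proof.
move=> moment_ge; apply: Rnot_lt_le => muD_lt.
have mu_ge0 := max_ge0.
have muD_ge0 : 0 <= mu ^ D by apply: pow_le.
have [j] := @pow_dominates (INR (size l).-1 ^ 2) ((mu ^ D) ^ 2) 1 (INR (size l) ^ 3)
  ltac:(nra) ltac:(lra).
apply/Rle_not_lt; have := moment_ge j.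
have sum_le : power_sum l (2 * (j * D)) <= INR (size l) * ((mu ^ D) ^ 2) ^ j.
  apply: power_sum_le => x lx.
  have x2_le : x ^ 2 <= mu ^ 2 by have := mu_max lx; have := opp_le_max lx; nra.
  have -> : ((mu ^ D) ^ 2) ^ j = (mu ^ 2) ^ (j * D).
    by rewrite -!pow_muln; congr (_ ^ _); lia.
  by rewrite pow_muln; apply: pow_incr; split => //; nra.
have size_sq_ge0 : 0 <= INR (size l) ^ 2 by apply: pow_le; apply: pos_INR.
have -> : (INR (size l).-1 ^ j) ^ 2 = (INR (size l).-1 ^ 2) ^ j.
  by rewrite -!pow_muln mulnC.
have -> : INR (size l) ^ 3 * ((mu ^ D) ^ 2) ^ j
        = INR (size l) ^ 2 * (INR (size l) * ((mu ^ D) ^ 2) ^ j) by ring.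
have := Rmult_le_compat_l _ _ _ size_sq_ge0 sum_le; lra.
Qed.

End PowerSums.

Lemma exp_sub_le c mu : 0 <= c <= mu -> exp c - c <= exp mu - mu.
Proof.
move=> [c_ge0 c_le]; have := exp_ineq1_le c; have := exp_ineq1_le (mu - c).
have -> : exp mu = exp c * exp (mu - c) by rewrite -exp_plus Rplus_minus.
nra.
Qed.

Lemma estrada_gt (l : seq R) mu c :
  power_sum l 1 = 0 -> mu \in l -> 0 < c <= mu ->
  exp c + INR (size l).-1 - c < estrada l.
Proof.
move=> sum0 l_mu [c_gt0 c_le]; set r := rem mu l.
have size_r : size r = (size l).-1 by rewrite size_rem.
have sum_r : power_sum r 1 = - mu.
  by move: sum0; rewrite (power_sum_rem _ l_mu) pow_1 -/r; lra.
have sum_1_plus : (\sum_(x <- r) Rplus 1 x)%R = INR (size r) + power_sum r 1.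
  rewrite /power_sum; elim: (r) => [|a s IHs]; first by rewrite !Rsum_nil /=; lra.
  by rewrite !Rsum_cons IHs (S_INR (size s)) pow_1; lra.
have exp_r : INR (size r) + power_sum r 1 < (\sum_(x <- r) exp x)%R.
  rewrite -sum_1_plus; apply: Rsum_lt => [x _|]; first exact: exp_ineq1_le.
  have [/hasP[x rx /eqP x_neq0]|all0] := boolP (has (fun x => x != 0) r).
    by exists x => //; exact: exp_ineq1.
  have : power_sum r 1 = 0.
    by rewrite /power_sum big1_seq // => x /andP[_ /(hasPn all0)]; rewrite negbK pow_1 => /eqP.
  lra.
have -> : estrada l = exp mu + (\sum_(x <- r) exp x)%R.
  by rewrite /estrada (perm_big _ (perm_to_rem l_mu)) big_cons.
have := exp_sub_le (conj (Rlt_le _ _ c_gt0) c_le); rewrite -size_r; lra.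
Qed.

Lemma Rpower_inv_le a mu D : 0 < a -> 0 <= mu -> (0 < D)%N -> a <= mu ^ D ->
  Rpower a (/ INR D) <= mu.
Proof.
move=> a_gt0 mu_ge0 D_gt0 a_le.
have D_pos : 0 < INR D by apply: lt_0_INR; apply/ltP.
have muD_gt0 : 0 < mu ^ D by lra.
have mu_gt0 : 0 < mu.
  have [mu0|//] : mu = 0 \/ 0 < mu by lra.
  by rewrite mu0 pow_i in muD_gt0; [lra | apply/ltP].
have -> : mu = Rpower (mu ^ D) (/ INR D).
  by rewrite -Rpower_pow // Rpower_mult Rinv_r ?Rpower_1 //; lra.
by apply: Rle_Rpower_l; [apply: Rlt_le; apply: Rinv_0_lt_compat | split].
Qed.

Lemma natr_INR m : (m%:R : R)%R = INR m.
Proof. by elim: m => [//|m IHm]; rewrite -addn1 natrD IHm plus_INR. Qed.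

Lemma INR_expn m k : INR (m ^ k) = INR m ^ k.
Proof. by elim: k => [//|k IHk]; rewrite expnS mult_INR IHk. Qed.

Lemma exprR (x : R) k : (x ^+ k)%R = x ^ k.
Proof. by elim: k => [//|k IHk]; rewrite exprS IHk. Qed.

Theorem mainTheorem4 (n : nat) (e : rel 'I_n) (lam : seq R) :
  (2 <= n)%N ->
  simple_graph e ->
  connected_graph e ->
  adj_spectrum e lam ->
  exp (Rpower (INR n.-1) (/ INR (diameter e))) + INR n.-1
    - Rpower (INR n.-1) (/ INR (diameter e))
  < estrada lam.
Proof.
move=> n_ge2 [e_sym e_irr] e_conn lam_spec.
have size_lam : size lam = n.
  by have := size_char_poly (adjmx e); rewrite lam_spec size_prod_XsubC => -[].
have power_sumE k : power_sum lam k = INR (\tr (nat_adjmx e ^+ k))%R.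
  rewrite -natr_INR -mxtrace_adjmx_exp (mxtrace_exp_split k lam_spec).
  by apply: eq_bigr => x _; rewrite exprR.
have D_gt0 := diameter_gt0 e_conn n_ge2.
have lam_neq0 : lam != [::] by rewrite -size_eq0 size_lam; case: (n) n_ge2.
have [mu lam_mu mu_max] := seq_has_max lam_neq0.
have power_sum_ge0 k : 0 <= power_sum lam k by rewrite power_sumE; exact: pos_INR.
have muD : INR n.-1 <= mu ^ diameter e.
  have := max_pow_ge power_sum_ge0 lam_mu mu_max (D := diameter e).
  rewrite size_lam; apply=> j; rewrite power_sumE -!INR_expn -mult_INR; apply/le_INR/leP.
  exact: mxtrace_exp_diameter_ge.
have n1_gt0 : 0 < INR n.-1 by apply: lt_0_INR; apply/ltP; case: (n) n_ge2 => [|[|]].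
have sum0 : power_sum lam 1 = 0 by rewrite power_sumE mxtrace_nat_adjmx.
have root_gt0 : 0 < Rpower (INR n.-1) (/ INR (diameter e)) by exact: exp_pos.
have root_le : Rpower (INR n.-1) (/ INR (diameter e)) <= mu.
  apply: Rpower_inv_le => //.
  exact: (max_ge0 power_sum_ge0 lam_mu mu_max).
by have := estrada_gt sum0 lam_mu (conj root_gt0 root_le); rewrite size_lam.
Qed.
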